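(* A binary matrix $A$ has at most one base that spans all other bases of $A$, both with respect to the binary setting and with respect to the boolean setting.
   Context: A set $X$ of $\{0,1\}$-vectors spans a vector $y$ in the binary (resp. boolean) sense if $y=\sum_{x\in X}c_xx$ with $c_x\in\{0,1\}$ using ordinary (resp. boolean, $1+1=1$) addition; $X$ spans a set $Y$ if it spans each vector of $Y$. A binary (resp. boolean) base of an $n\times m$ binary matrix $A$ is a set of $\{0,1\}$ column vectors of length $n$ spanning every column of $A$ in the corresponding sense, of minimum cardinality among such spanning sets. *)

From mathcomp Require Import all_boot all_order all_algebra.
Set Implicit Arguments. Unset Strict Implicit. Unset Printing Implicit Defensive.

(* {0,1}-vectors of length n, with false = 0 and true = 1. *)
Definition bvec (n : nat) := {ffun 'I_n -> bool}.

(* Binary span: y is a sum, with ordinary (integer) addition, of a subfamily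
   of X (coefficients c_x in {0,1}). *)
Definition binary_spans (n : nat) (X : {set bvec n}) (y : bvec n) : Prop :=
  exists2 S : {set bvec n}, S \subset X &
    forall i : 'I_n, (\sum_(x in S) nat_of_bool (x i))%N = nat_of_bool (y i).

(* Boolean span: y is a boolean sum (1 + 1 = 1, i.e. entrywise OR) of a
   subfamily of X. *)
Definition boolean_spans (n : nat) (X : {set bvec n}) (y : bvec n) : Prop :=
  exists2 S : {set bvec n}, S \subset X &
    forall i : 'I_n, [exists x in S, x i] = y i.

Definition spans_set (n : nat) (sp : {set bvec n} -> bvec n -> Prop)
  (X Y : {set bvec n}) : Prop :=
  forall y, y \in Y -> sp X y.

Definition col_vec (n m : nat) (A : 'M[bool]_(n, m)) (j : 'I_m) : bvec n :=
  [ffun i => A i j].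

Definition spans_matrix (n m : nat) (sp : {set bvec n} -> bvec n -> Prop)
  (A : 'M[bool]_(n, m)) (X : {set bvec n}) : Prop :=
  forall j : 'I_m, sp X (col_vec A j).

Definition is_base (n m : nat) (sp : {set bvec n} -> bvec n -> Prop)
  (A : 'M[bool]_(n, m)) (X : {set bvec n}) : Prop :=
  spans_matrix sp A X /\
  forall X' : {set bvec n}, spans_matrix sp A X' -> #|X| <= #|X'|.

Definition spans_all_bases (n m : nat) (sp : {set bvec n} -> bvec n -> Prop)
  (A : 'M[bool]_(n, m)) (B : {set bvec n}) : Prop :=
  is_base sp A B /\ forall B' : {set bvec n}, is_base sp A B' -> spans_set sp B B'.

(* A vector spanned by X (in either sense) is already spanned by the members
   of X lying entrywise below it. If B1 and B2 both span all bases and x is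
   in B1 but not in B2, write x over the members of B2 below x and each of
   those over the members of B1 below it: x never occurs, since y <= x with
   x <= y would put x in B2. So x is spanned by B1 minus x, which then spans
   A, against the minimality of B1. Hence B1 is contained in B2, and
   symmetrically. *)

From mathcomp Require Import all_boot all_order all_algebra.
Set Implicit Arguments. Unset Strict Implicit. Unset Printing Implicit Defensive.

Definition bvec_le n (x y : bvec n) := [forall i, x i ==> y i].

Lemma bvec_le_anti n (x y : bvec n) : bvec_le x y -> bvec_le y x -> x = y.
Proof.
move=> /forallP le_xy /forallP le_yx; apply/ffunP => i.
by move: (le_xy i) (le_yx i); case: (x i); case: (y i).
Qed.

Section BaseUniqueness.

Variables (n m : nat) (A : 'M[bool]_(n, m)) (sp : {set bvec n} -> bvec n -> Prop).

Hypothesis sp_subset : forall (X Y : {set bvec n}) y, X \subset Y -> sp X y -> sp Y y.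
Hypothesis sp_mem : forall (X : {set bvec n}) x, x \in X -> sp X x.
Hypothesis sp_trans : forall X Y z, spans_set sp X Y -> sp Y z -> sp X z.
Hypothesis sp_below : forall X y, sp X y -> sp [set x in X | bvec_le x y] y.

Lemma base_mem_not_spanned X x : is_base sp A X -> x \in X -> ~ sp (X :\ x) x.
Proof.
move=> [spanA min] xX spanx.
have spanX : spans_set sp (X :\ x) X.
  move=> y yX; have [->|ne_yx] := eqVneq y x; first exact: spanx.
  by apply: sp_mem; rewrite !inE ne_yx.
have := min (X :\ x) (fun j => sp_trans spanX (spanA j)).
by rewrite (cardsD1 x X) xX ltnn.
Qed.

Lemma base_subset_mutual_span B1 B2 :
  is_base sp A B1 -> spans_set sp B1 B2 -> spans_set sp B2 B1 -> B1 \subset B2.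
Proof.
move=> baseB1 B1spanB2 B2spanB1; apply/subsetP => x xB1.
apply/negPn/negP => xNB2; apply: (base_mem_not_spanned baseB1 xB1).
apply: (sp_trans _ (sp_below (B2spanB1 x xB1))) => y.
rewrite inE => /andP[yB2 le_yx].
apply: sp_subset (sp_below (B1spanB2 y yB2)).
apply/subsetP => w; rewrite !inE => /andP[wB1 le_wy]; rewrite wB1 andbT.
apply: contraNneq xNB2 => eq_wx; move: le_wy; rewrite eq_wx => le_xy.
by rewrite (bvec_le_anti le_xy le_yx).
Qed.

Lemma spans_all_bases_unique B1 B2 :
  spans_all_bases sp A B1 -> spans_all_bases sp A B2 -> B1 = B2.
Proof.
move=> [baseB1 allB1] [baseB2 allB2]; apply/eqP; rewrite eqEsubset.
apply/andP; split; apply: base_subset_mutual_span => //.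
- exact: allB1.
- exact: allB2.
- exact: allB2.
- exact: allB1.
Qed.

End BaseUniqueness.

Section SubfamilySpan.

Variables (n : nat) (P : {set bvec n} -> bvec n -> Prop).

Definition subfamily_span (X : {set bvec n}) (y : bvec n) :=
  exists2 S : {set bvec n}, S \subset X & P S y.

Hypothesis P_set1 : forall x, P [set x] x.
Hypothesis P_bigcup : forall S (F : bvec n -> {set bvec n}) z,
  P S z -> (forall s, s \in S -> P (F s) s) -> P (\bigcup_(s in S) F s) z.
Hypothesis P_le : forall S y s, P S y -> s \in S -> bvec_le s y.

Lemma subfamily_span_subset (X Y : {set bvec n}) y :
  X \subset Y -> subfamily_span X y -> subfamily_span Y y.
Proof. by move=> sXY [S sSX PSy]; exists S => //; apply: subset_trans sXY. Qed.

Lemma subfamily_span_mem (X : {set bvec n}) x : x \in X -> subfamily_span X x.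
Proof. by move=> xX; exists [set x]; rewrite ?sub1set. Qed.

Lemma subfamily_span_trans X Y z :
  spans_set subfamily_span X Y -> subfamily_span Y z -> subfamily_span X z.
Proof.
move=> XspanY [S sSY PSz].
have /fin_all_exists[F FP] : forall y, exists T : {set bvec n},
    y \in Y -> T \subset X /\ P T y.
  move=> y; have [yY|_] := boolP (y \in Y); last by exists set0.
  by have [T sTX PTy] := XspanY y yY; exists T.
have FPS s : s \in S -> F s \subset X /\ P (F s) s by move/(subsetP sSY)/FP.
exists (\bigcup_(s in S) F s); last by apply: P_bigcup => // s /FPS[].
by apply/bigcupsP => s /FPS[].
Qed.

Lemma subfamily_span_below X y :
  subfamily_span X y -> subfamily_span [set x in X | bvec_le x y] y.
Proof.
move=> [S sSX PSy]; exists S => //; apply/subsetP => s sS.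
by rewrite inE (subsetP sSX s sS) (P_le PSy sS).
Qed.

Lemma subfamily_span_all_bases_unique m (A : 'M[bool]_(n, m)) B1 B2 :
  spans_all_bases subfamily_span A B1 -> spans_all_bases subfamily_span A B2 ->
  B1 = B2.
Proof.
apply: spans_all_bases_unique.
- exact: subfamily_span_subset.
- exact: subfamily_span_mem.
- exact: subfamily_span_trans.
- exact: subfamily_span_below.
Qed.

End SubfamilySpan.

Lemma sum_bvec_card n (S : {set bvec n}) i :
  (\sum_(x in S) x i)%N = #|[set x in S | x i]|.
Proof. by rewrite -big_mkcondr sum1dep_card. Qed.

(* The sets F s may overlap; only the (at most one) s with p s contributes. *)
Lemma card_bigcup_sel (T U : finType) (S : {set T}) (F : T -> {set U})
    (p : pred T) (q : pred U) (b : bool) :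
  (forall s, s \in S -> #|[set x in F s | q x]| = p s) ->
  #|[set s in S | p s]| = b -> #|[set x in \bigcup_(s in S) F s | q x]| = b.
Proof.
move=> cardF cardS.
have sel s x : s \in S -> x \in F s -> q x -> p s.
  move=> sS xFs qx; apply/negPn/negP => /negbTE ps.
  have /eqP := cardF s sS; rewrite ps cards_eq0 => /eqP/setP/(_ x).
  by rewrite !inE xFs qx.
have -> : [set x in \bigcup_(s in S) F s | q x] =
          \bigcup_(s in [set s in S | p s]) [set x in F s | q x].
  apply/setP => x; rewrite inE; apply/andP/bigcupP.
    move=> [/bigcupP[s sS xFs] qx]; exists s; last by rewrite inE xFs.
    by rewrite inE sS (sel s x).
  move=> [s]; rewrite !inE => /andP[sS _] /andP[xFs ->]; split => //.
  by apply/bigcupP; exists s.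
case: b cardS => /eqP; last by rewrite cards_eq0 => /eqP ->; rewrite big_set0 cards0.
move=> /cards1P[s0 S1].
have /setIdP[s0S ps0] : s0 \in [set s in S | p s] by rewrite S1 set11.
by rewrite S1 big_set1 cardF ?ps0.
Qed.

(* [binary_spans n] and [boolean_spans n] are convertible to the
   [subfamily_span] of [is_binary_sum] and [is_boolean_sum]. *)
Definition is_binary_sum n (S : {set bvec n}) (y : bvec n) :=
  forall i, (\sum_(x in S) x i)%N = y i.

Lemma is_binary_sum_set1 n (x : bvec n) : is_binary_sum [set x] x.
Proof. by move=> i; rewrite big_set1. Qed.

Lemma is_binary_sum_bigcup n (S : {set bvec n}) (F : bvec n -> {set bvec n}) z :
  is_binary_sum S z -> (forall s, s \in S -> is_binary_sum (F s) s) ->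
  is_binary_sum (\bigcup_(s in S) F s) z.
Proof.
move=> Sz FS i; rewrite sum_bvec_card.
apply: (card_bigcup_sel (p := fun s : bvec n => s i)); last by rewrite -sum_bvec_card.
by move=> s sS; rewrite -sum_bvec_card FS.
Qed.

Lemma is_binary_sum_le n (S : {set bvec n}) y s :
  is_binary_sum S y -> s \in S -> bvec_le s y.
Proof.
move=> Sy sS; apply/forallP => i; apply/implyP => si.
by have := Sy i; rewrite (bigD1 s) //= si; case: (y i).
Qed.

Lemma existsb_bigcup (T U : finType) (S : {set T}) (F : T -> {set U}) (q : pred U) :
  [exists x in \bigcup_(s in S) F s, q x] = [exists s in S, [exists x in F s, q x]].
Proof.
apply/existsP/existsP.
  move=> [x /andP[/bigcupP[s sS xFs] qx]].
  by exists s; rewrite sS; apply/existsP; exists x; rewrite xFs.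
move=> [s /andP[sS /existsP[x /andP[xFs qx]]]].
by exists x; rewrite qx andbT; apply/bigcupP; exists s.
Qed.

Definition is_boolean_sum n (S : {set bvec n}) (y : bvec n) :=
  forall i, [exists x in S, x i] = y i.

Lemma is_boolean_sum_set1 n (x : bvec n) : is_boolean_sum [set x] x.
Proof.
move=> i; apply/existsP/idP => [[y /andP[/set1P-> //]] | xi].
by exists x; rewrite set11.
Qed.

Lemma is_boolean_sum_bigcup n (S : {set bvec n}) (F : bvec n -> {set bvec n}) z :
  is_boolean_sum S z -> (forall s, s \in S -> is_boolean_sum (F s) s) ->
  is_boolean_sum (\bigcup_(s in S) F s) z.
Proof.
move=> Sz FS i; rewrite existsb_bigcup -Sz; apply: eq_existsb => s.
by have [sS|//] := boolP (s \in S); rewrite FS.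
Qed.

Lemma is_boolean_sum_le n (S : {set bvec n}) y s :
  is_boolean_sum S y -> s \in S -> bvec_le s y.
Proof.
move=> Sy sS; apply/forallP => i; apply/implyP => si.
by rewrite -Sy; apply/existsP; exists s; rewrite sS.
Qed.

Theorem mainTheorem15 (n m : nat) (A : 'M[bool]_(n, m)) :
  (forall B1 B2 : {set bvec n},
      spans_all_bases (@binary_spans n) A B1 ->
      spans_all_bases (@binary_spans n) A B2 -> B1 = B2) /\
  (forall B1 B2 : {set bvec n},
      spans_all_bases (@boolean_spans n) A B1 ->
      spans_all_bases (@boolean_spans n) A B2 -> B1 = B2).
Proof.
split.
  apply: (subfamily_span_all_bases_unique (P := @is_binary_sum n)).
  - exact: is_binary_sum_set1.
  - exact: is_binary_sum_bigcup.
  - exact: is_binary_sum_le.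
apply: (subfamily_span_all_bases_unique (P := @is_boolean_sum n)).
- exact: is_boolean_sum_set1.
- exact: is_boolean_sum_bigcup.
- exact: is_boolean_sum_le.
Qed.
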